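(* $\mathfrak{ss}_o\leq\max\{\mathfrak b,\mathfrak{ss}_{i,o}\}$ and $\min\{\mathfrak d,\mathfrak{ss}_{i,o}^\perp\}\leq\mathfrak{ss}_o^\perp$.
   Context: Let $\mathfrak S_{cc}$ be the set of all sequences $\mathbf a=\langle a_i:i\in\omega\rangle$ of rational numbers with $a_i\to0$ such that $\sum_i a_i$ is conditionally convergent (converges to a real number, with the positive terms summing to $+\infty$ and the negative terms to $-\infty$). Let $[\omega]^\omega_\omega$ be the set of infinite coinfinite subsets of $\omega$; for such $X$ with increasing enumeration $\langle i_n\rangle$, $\sum_X\mathbf a$ denotes $\sum_n a_{i_n}$. A series diverges if it does not converge to a real number; it diverges by oscillation if its partial sums do not have a unique accumulation point in $\mathbb R\cup\{+\infty,-\infty\}$ (here $\pm\infty$ counts as an accumulation point when the partial sums are unbounded above, resp. below). $\mathfrak{ss}_{i,o}$ (resp. $\mathfrak{ss}_o$) is the least cardinality of $\mathcal X\subseteq[\omega]^\omega_\omega$ such that every $\mathbf a\in\mathfrak S_{cc}$ has some $X\in\mathcal X$ with $\sum_X\mathbf a$ divergent (resp. divergent by oscillation); $\mathfrak{ss}_{i,o}^\perp$ (resp. $\mathfrak{ss}_o^\perp$) is the least cardinality of $\mathcal A\subseteq\mathfrak S_{cc}$ such that no $X\in[\omega]^\omega_\omega$ makes $\sum_X\mathbf a$ divergent (resp. divergent by oscillation) for all $\mathbf a\in\mathcal A$. $\mathfrak b$, $\mathfrak d$ are the bounding and dominating numbers. *)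

From Stdlib Require Import Reals QArith Qreals.
From Coquelicot Require Import Rbar.
Open Scope R_scope.

Fixpoint psum (u : nat -> R) (n : nat) : R :=
  match n with O => 0 | S k => psum u k + u k end.

Definition series_conv (u : nat -> R) : Prop := exists l : R, Un_cv (psum u) l.

Definition acc_pt (s : nat -> R) (p : Rbar) : Prop :=
  match p with
  | Finite l => forall eps, 0 < eps -> forall N, exists n, (N <= n)%nat /\ Rabs (s n - l) < eps
  | p_infty => forall M, exists n, M < s n
  | m_infty => forall M, exists n, s n < M
  end.

Definition series_div (u : nat -> R) : Prop := ~ series_conv u.

Definition series_osc (u : nat -> R) : Prop := ~ (exists! p : Rbar, acc_pt (psum u) p).

Definition qseq (a : nat -> Q) : nat -> R := fun i => Q2R (a i).

Definition Scc (a : nat -> Q) : Prop :=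
  Un_cv (qseq a) 0 /\ series_conv (qseq a) /\
  (forall M, exists n, M < psum (fun i => Rmax (qseq a i) 0) n) /\
  (forall M, exists n, psum (fun i => Rmin (qseq a i) 0) n < M).

Definition infcoinf (X : nat -> Prop) : Prop :=
  (forall n, exists m, (n <= m)%nat /\ X m) /\ (forall n, exists m, (n <= m)%nat /\ ~ X m).

Definition is_enum (X : nat -> Prop) (e : nat -> nat) : Prop :=
  (forall n, (e n < e (S n))%nat) /\ (forall m, X m <-> exists n, e n = m).

(* sum_X a diverges / diverges by oscillation (X infinite, so its increasing
   enumeration exists and is unique) *)
Definition sub_div (X : nat -> Prop) (a : nat -> Q) : Prop :=
  forall e, is_enum X e -> series_div (fun n => qseq a (e n)).
Definition sub_osc (X : nat -> Prop) (a : nat -> Q) : Prop :=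
  forall e, is_enum X e -> series_osc (fun n => qseq a (e n)).

Definition le_star (f g : nat -> nat) : Prop := exists N, forall n, (N <= n)%nat -> (f n <= g n)%nat.

Definition unbounded_family {I : Type} (B : I -> nat -> nat) : Prop :=
  ~ exists g, forall i, le_star (B i) g.
Definition dominating_family {I : Type} (D : I -> nat -> nat) : Prop :=
  forall f, exists i, le_star f (D i).

(* Let the series of [a] be conditionally convergent, with partial sums bounded by [C].
   If [X] is infinite and the damped series of [a k / (1 + sum_{j <= k} |a j|)] diverges
   along [X], then the partial sums of [a] along [X] are unbounded (otherwise the Dirichlet
   test would make the damped series converge), say from above.  So every [p] has a
   [G p > p] such that the sum of [a] over [X] between [p] and [G p] exceeds
   [sum_{k < p} |a k| + 2 C + p].

   Cut the naturals into consecutive blocks growing with a function [f]; a block starting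
   at [p] fits if it contains [[p, G p)].  If [f] escapes a threshold computed from [G],
   infinitely many blocks fit.  Given a second set [X'], let [Y] agree with [X] on the
   blocks outside [X'] and with its complement on the blocks in [X'].  On a fitting block
   starting at [p], the partial sums of [a] along [Y] climb above [p] if the block is
   outside [X'] and drop below [-p] if it is in [X'].  If a fixed conditionally convergent
   series, spread out along the fitting blocks, diverges along [X'], then [X'] contains
   infinitely many fitting blocks and misses infinitely many, so the sum along [Y]
   oscillates.

   [Y] is determined by [X] and [X'], taken from a family witnessing [ss_{i,o}], and by
   [f], taken from an unbounded family; by Hessenberg's theorem [|I * I| = |I|] for
   infinite [I], so [max{b, ss_{i,o}}] such sets suffice.  Dually, for fewer than [d]
   series one [f] escapes all their thresholds, and for fewer than [ss_{i,o}^perp] series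
   the sets [X] and [X'] can be chosen simultaneously for all of them. *)

From Stdlib Require Import Reals QArith Qreals.
From Coquelicot Require Import Rbar.
From Stdlib Require Import Arith ZArith Lia Lra Qabs.
From Stdlib Require Import Classical ClassicalEpsilon FunctionalExtensionality Cantor.
From mathcomp Require classical_sets boolp.

Open Scope nat_scope.

Definition decide (P : Prop) : {P} + {~ P} := excluded_middle_informative P.

Definition extends {K V : Type} (D : K -> Prop) (f : K -> V) (D' : K -> Prop) (f' : K -> V) :=
  forall x, D x -> D' x /\ f' x = f x.

Definition is_chain {K V I : Type} (D : I -> K -> Prop) (f : I -> K -> V) :=
  forall i j, extends (D i) (f i) (D j) (f j) \/ extends (D j) (f j) (D i) (f i).

Lemma chain_union {K V I : Type} (D : I -> K -> Prop) (f : I -> K -> V) :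
  inhabited I -> is_chain D f -> exists fu : K -> V, forall i x, D i x -> fu x = f i x.
Proof.
intros [i0] Hch; exists (fun x => f (epsilon (inhabits i0) (fun i => D i x)) x).
intros i x Hx; set (j := epsilon _ _).
assert (Hj : D j x) by (apply (epsilon_spec (inhabits i0) (fun i => D i x)); eauto).
destruct (Hch i j) as [Hij|Hji]; [exact (proj2 (Hij x Hx))|symmetry; exact (proj2 (Hji x Hj))].
Qed.

Section PartialFunctionZorn.
Variables (K V : Type) (P : (K -> Prop) -> (K -> V) -> Prop).

Definition chain_closed := forall (I : Type) (D : I -> K -> Prop) (f : I -> K -> V),
  inhabited I -> is_chain D f -> (forall i, P (D i) (f i)) ->
  forall fu, (forall i x, D i x -> fu x = f i x) -> P (fun x => exists i, D i x) fu.

Lemma partial_fun_zorn D0 f0 : P D0 f0 -> chain_closed ->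
  exists D f, P D f /\ forall D' f', P D' f' -> extends D f D' f' -> forall x, D' x -> D x.
Proof.
intros P0 Hchain.
pose (T := {p : (K -> Prop) * (K -> V) | P (fst p) (snd p)}).
pose (dom (t : T) := fst (proj1_sig t)); pose (fn (t : T) := snd (proj1_sig t)).
pose (le (s t : T) := boolp.asbool (extends (dom s) (fn s) (dom t) (fn t))).
assert (leP : forall s t, le s t = true <-> extends (dom s) (fn s) (dom t) (fn t))
  by (intros; symmetry; apply reflect_iff, boolp.asboolP).
destruct (@classical_sets.ZL_preorder T (exist _ (D0, f0) P0) le) as [t Ht].
- intros t; apply leP; intros x Hx; auto.
- intros r s t Hrs Hst; apply leP; apply leP in Hrs, Hst.
  intros x Hx; destruct (Hrs x Hx) as [Hs Ex]; destruct (Hst x Hs); split; congruence.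
- intros A Atot; destruct (classic (exists s, A s)) as [[s0 As0]|Aempty].
  + pose (I := {s : T | A s}).
    assert (Hch : is_chain (fun i : I => dom (proj1_sig i)) (fun i : I => fn (proj1_sig i))).
    { intros i j; destruct (Atot _ _ (proj2_sig i) (proj2_sig j)); [left|right];
        apply leP; assumption. }
    destruct (chain_union _ _ (inhabits (exist _ s0 As0 : I)) Hch) as [fu Hfu].
    assert (PU : P (fun x => exists i : I, dom (proj1_sig i) x) fu).
    { apply (Hchain I _ _ (inhabits (exist _ s0 As0 : I)) Hch); [|exact Hfu].
      intros i; exact (proj2_sig (proj1_sig i)). }
    exists (exist (fun p => P (fst p) (snd p)) (fun x => exists i : I, dom (proj1_sig i) x, fu) PU).
    intros s As; apply leP; intros x Hx; split.
    * exists (exist _ s As); exact Hx.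
    * exact (Hfu (exist _ s As) x Hx).
  + exists (exist _ (D0, f0) P0 : T); intros s As; exfalso; eauto.
- exists (dom t), (fn t); split; [exact (proj2_sig t)|].
  intros D' f' PD' Hext x Hx.
  pose (t' := exist (fun p => P (fst p) (snd p)) (D', f') PD').
  assert (Htt' : le t t' = true) by (apply leP; exact Hext).
  exact (proj1 (proj1 (leP _ _) (Ht t' Htt') x Hx)).
Qed.

End PartialFunctionZorn.

Definition injects_into {K : Type} (A B : K -> Prop) (phi : K -> K) :=
  (forall x, A x -> B (phi x)) /\ (forall x y, A x -> A y -> phi x = phi y -> x = y).

Section Comparability.
Variables (K : Type) (M : K -> Prop).

Definition partial_injection (D : K -> Prop) (phi : K -> K) :=
  (forall x, D x -> M x) /\ injects_into D (fun y => ~ M y) phi.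

Lemma partial_injection_chain_closed : chain_closed K K partial_injection.
Proof.
intros I D f _ Hch HP fu Hfu; split; [|split].
- intros x [i Hi]; exact (proj1 (HP i) x Hi).
- intros x [i Hi]; rewrite (Hfu i x Hi); exact (proj1 (proj2 (HP i)) x Hi).
- intros x y [i Hi] [j Hj] E; rewrite (Hfu i x Hi), (Hfu j y Hj) in E.
  destruct (Hch i j) as [Hij|Hji].
  + destruct (Hij x Hi) as [Hjx Ex]; rewrite <- Ex in E.
    exact (proj2 (proj2 (HP j)) x y Hjx Hj E).
  + destruct (Hji y Hj) as [Hiy Ey]; rewrite <- Ey in E.
    exact (proj2 (proj2 (HP i)) x y Hi Hiy E).
Qed.

Lemma partial_injection_add D phi x0 y0 : partial_injection D phi -> M x0 -> ~ M y0 ->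
  (forall x, D x -> phi x <> y0) ->
  partial_injection (fun x => D x \/ x = x0) (fun x => if decide (x = x0) then y0 else phi x).
Proof.
intros [DM [Hout Hinj]] Mx0 Ny0 Hy0; split; [|split].
- intros x [Hx| ->]; auto.
- intros x Hx; destruct decide as [_|ne]; [exact Ny0|].
  destruct Hx as [Hx|e]; [auto|contradiction].
- intros x y Hx Hy E; destruct (decide (x = x0)) as [->|nx], (decide (y = x0)) as [->|ny].
  + reflexivity.
  + destruct Hy as [Hy|]; [|contradiction]; exfalso; exact (Hy0 y Hy (eq_sym E)).
  + destruct Hx as [Hx|]; [|contradiction]; exfalso; exact (Hy0 x Hx E).
  + destruct Hx as [Hx|], Hy as [Hy|]; try contradiction; exact (Hinj x y Hx Hy E).
Qed.

Lemma complement_comparable :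
  (exists phi, injects_into M (fun y => ~ M y) phi) \/
  (exists psi, injects_into (fun y => ~ M y) M psi).
Proof.
destruct (partial_fun_zorn K K partial_injection (fun _ => False) (fun x => x))
  as [D [phi [[DM Hphi] Hmax]]].
{ split; [|split]; intros; contradiction. }
{ exact partial_injection_chain_closed. }
destruct (classic (forall x, M x -> D x)) as [MD|[x0 Hx0]%not_all_ex_not].
{ left; exists phi; split; intros; apply Hphi; auto. }
apply imply_to_and in Hx0 as [Mx0 NDx0].
destruct (classic (forall y, ~ M y -> exists x, D x /\ phi x = y))
  as [Onto|[y0 Hy0]%not_all_ex_not].
- right; exists (fun y => epsilon (inhabits y) (fun x => D x /\ phi x = y)); split.
  + intros y Hy; apply DM; exact (proj1 (epsilon_spec (inhabits y) _ (Onto y Hy))).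
  + intros y y' Hy Hy' E.
    rewrite <- (proj2 (epsilon_spec (inhabits y) _ (Onto y Hy))),
      <- (proj2 (epsilon_spec (inhabits y') _ (Onto y' Hy'))).
    f_equal; exact E.
- apply imply_to_and in Hy0 as [Ny0 Hy0]; exfalso; apply NDx0.
  apply (Hmax (fun x => D x \/ x = x0) (fun x => if decide (x = x0) then y0 else phi x)).
  + apply partial_injection_add; [split; auto|auto|auto|].
    intros x Hx E; apply Hy0; eauto.
  + intros x Hx; split; [left; exact Hx|].
    destruct decide as [->|]; [contradiction|reflexivity].
  + right; reflexivity.
Qed.

End Comparability.

Section Hessenberg.
Variables (K : Type) (iota : nat -> K).
Hypothesis iota_inj : forall n m, iota n = iota m -> n = m.

Definition pairing (M : K -> Prop) (g : K -> K * K) :=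
  (forall n, M (iota n)) /\
  (forall x, M x -> M (fst (g x)) /\ M (snd (g x))) /\
  (forall y z, M y -> M z -> exists x, M x /\ g x = (y, z)).

Lemma pairing_range_iota : exists g, pairing (fun x => exists n, iota n = x) g.
Proof.
pose (index x := epsilon (inhabits 0) (fun n => iota n = x)).
assert (index_iota : forall n, index (iota n) = n).
{ intros n; apply iota_inj, (epsilon_spec (inhabits 0) (fun m => iota m = iota n)); eauto. }
exists (fun x => (iota (fst (of_nat (index x))), iota (snd (of_nat (index x))))).
split; [|split].
- intros n; eauto.
- intros x _; split; simpl; eauto.
- intros y z [a <-] [b <-]; exists (iota (to_nat (a, b))); split; [eauto|].
  rewrite index_iota, cancel_of_to; reflexivity.
Qed.

Lemma pairing_chain_closed : chain_closed K (K * K) pairing.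
Proof.
intros I M g [i0] Hch HP gu Hgu; split; [|split].
- intros n; exists i0; apply (HP i0).
- intros x [i Hi]; rewrite (Hgu i x Hi).
  destruct (proj1 (proj2 (HP i)) x Hi); split; eauto.
- intros y z [i Hi] [j Hj].
  assert (exists k, M k y /\ M k z) as [k [Hky Hkz]].
  { destruct (Hch i j) as [Hij|Hji].
    - exists j; split; [apply (Hij y Hi)|exact Hj].
    - exists i; split; [exact Hi|apply (Hji z Hj)]. }
  destruct (proj2 (proj2 (HP k)) y z Hky Hkz) as [x [Hx Ex]].
  exists x; split; [eauto|rewrite (Hgu k x Hx); exact Ex].
Qed.

Section Extension.
Variables (M : K -> Prop) (g : K -> K * K) (phi : K -> K).
Hypothesis Hg : pairing M g.
Hypothesis Hphi : injects_into M (fun y => ~ M y) phi.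

Definition extended_set x := M x \/ exists m, M m /\ phi m = x.

(* The first coordinate of [g m] selects which of M * phi M, phi M * M, phi M * phi M
   the new point [phi m] is sent to. *)
Definition new_pair (m : K) : K * K :=
  let (u, v) := g m in
  let (p, q) := g v in
  if decide (u = iota 0) then (p, phi q)
  else if decide (u = iota 1) then (phi p, q) else (phi p, phi q).

Definition extended_map x :=
  if decide (M x) then g x else new_pair (epsilon (inhabits x) (fun m => M m /\ phi m = x)).

Lemma extended_map_phi m : M m -> extended_map (phi m) = new_pair m.
Proof.
intros Hm; unfold extended_map.
destruct decide as [Hin|_]; [exfalso; exact (proj1 Hphi m Hm Hin)|].
destruct (epsilon_spec (inhabits (phi m)) (fun m' => M m' /\ phi m' = phi m)) as [Hm' E];
  [eauto|].
rewrite (proj2 Hphi _ _ Hm' Hm E); reflexivity.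
Qed.

Lemma new_pair_closed m :
  M m -> extended_set (fst (new_pair m)) /\ extended_set (snd (new_pair m)).
Proof.
destruct Hg as [_ [G2 _]]; intros Hm; unfold new_pair.
destruct (g m) as [u v] eqn:Em; destruct (G2 m Hm) as [_ Hv]; rewrite Em in Hv.
destruct (g v) as [p q] eqn:Ev; destruct (G2 v Hv) as [Hp Hq]; rewrite Ev in Hp, Hq.
unfold extended_set; repeat destruct decide; simpl in *; split; eauto.
Qed.

Lemma new_pair_hits u y z : M u -> M y -> M z -> exists m, M m /\ new_pair m =
  if decide (u = iota 0) then (y, phi z)
  else if decide (u = iota 1) then (phi y, z) else (phi y, phi z).
Proof.
destruct Hg as [_ [_ G3]]; intros Hu Hy Hz.
destruct (G3 y z Hy Hz) as [v [Hv Ev]], (G3 u v Hu Hv) as [m [Hm Em]].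
exists m; split; [exact Hm|]; unfold new_pair; rewrite Em, Ev; reflexivity.
Qed.

Lemma extended_pairing : pairing extended_set extended_map.
Proof.
destruct Hg as [G1 [G2 G3]]; split; [|split].
- intros n; left; apply G1.
- intros x [Hx|[m [Hm <-]]].
  + unfold extended_map; destruct decide; [|contradiction].
    destruct (G2 x Hx); split; left; auto.
  + rewrite extended_map_phi by exact Hm; exact (new_pair_closed m Hm).
- intros y z [Hy|[p [Hp <-]]] [Hz|[q [Hq <-]]].
  + destruct (G3 y z Hy Hz) as [x [Hx E]]; exists x; split; [left; exact Hx|].
    unfold extended_map; destruct decide; [exact E|contradiction].
  + destruct (new_pair_hits (iota 0) y q (G1 0) Hy Hq) as [m [Hm E]].
    exists (phi m); split; [right; eauto|]; rewrite extended_map_phi, E by exact Hm.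
    destruct decide; [reflexivity|contradiction].
  + destruct (new_pair_hits (iota 1) p z (G1 1) Hp Hz) as [m [Hm E]].
    exists (phi m); split; [right; eauto|]; rewrite extended_map_phi, E by exact Hm.
    destruct decide as [e|_]; [apply iota_inj in e; discriminate|].
    destruct decide; [reflexivity|contradiction].
  + destruct (new_pair_hits (iota 2) p q (G1 2) Hp Hq) as [m [Hm E]].
    exists (phi m); split; [right; eauto|]; rewrite extended_map_phi, E by exact Hm.
    do 2 (destruct decide as [e|_]; [apply iota_inj in e; discriminate|]); reflexivity.
Qed.

Lemma extended_extends : extends M g extended_set extended_map.
Proof.
intros x Hx; split; [left; exact Hx|].
unfold extended_map; destruct decide; [reflexivity|contradiction].
Qed.

End Extension.

Lemma maximal_pairing_no_injection M g : pairing M g ->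
  (forall M' g', pairing M' g' -> extends M g M' g' -> forall x, M' x -> M x) ->
  ~ exists phi, injects_into M (fun y => ~ M y) phi.
Proof.
intros Hg Hmax [phi Hphi].
apply (proj1 Hphi (iota 0) (proj1 Hg 0)).
apply (Hmax _ _ (extended_pairing M g phi Hg Hphi) (extended_extends M g phi)).
right; exists (iota 0); split; [apply Hg|reflexivity].
Qed.

Theorem hessenberg : exists h : K -> K * K, forall y z, exists x, h x = (y, z).
Proof.
destruct pairing_range_iota as [g0 Hg0].
destruct (partial_fun_zorn K (K * K) pairing _ _ Hg0 pairing_chain_closed)
  as [M [g [Hg Hmax]]].
destruct (complement_comparable K M) as [Hphi|[psi [psi_in psi_inj]]].
{ exfalso; exact (maximal_pairing_no_injection M g Hg Hmax Hphi). }
destruct Hg as [G1 [G2 G3]].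
(* [s] maps [M] onto [K]: pairs tagged [iota 0] give [M] itself, the others give the
   complement of [M] through the inverse of [psi]. *)
pose (s m := let (u, v) := g m in
  if decide (u = iota 0) then v else epsilon (inhabits v) (fun y => ~ M y /\ psi y = v)).
assert (s_onto : forall x, exists m, M m /\ s m = x).
{ intros x; destruct (classic (M x)) as [Mx|Nx].
  - destruct (G3 (iota 0) x (G1 0) Mx) as [m [Hm E]]; exists m; split; [exact Hm|].
    unfold s; rewrite E; destruct decide; congruence.
  - destruct (G3 (iota 1) (psi x) (G1 1) (psi_in x Nx)) as [m [Hm E]].
    exists m; split; [exact Hm|].
    unfold s; rewrite E; destruct decide as [e|_]; [apply iota_inj in e; discriminate|].
    destruct (epsilon_spec (inhabits (psi x)) (fun y => ~ M y /\ psi y = psi x)) as [Ny Ey];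
      [eauto|].
    apply psi_inj; auto. }
exists (fun x => let (u, v) := g (if decide (M x) then x else iota 0) in (s u, s v)).
intros y z; destruct (s_onto y) as [u [Hu <-]], (s_onto z) as [v [Hv <-]].
destruct (G3 u v Hu Hv) as [m [Hm Em]]; exists m.
destruct decide; [rewrite Em; reflexivity|contradiction].
Qed.

End Hessenberg.

Section UnboundedFamily.
Variables (I : Type) (B : I -> nat -> nat).
Hypothesis HB : unbounded_family B.

Lemma unbounded_family_escapes h : exists i, ~ le_star (B i) h.
Proof.
apply NNPP; intro H; apply HB; exists h; intros i.
apply NNPP; intro Hi; apply H; eauto.
Qed.

Definition escaping (h : nat -> nat) : I :=
  proj1_sig (constructive_indefinite_description _ (unbounded_family_escapes h)).

Lemma escaping_spec h : ~ le_star (B (escaping h)) h.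
Proof. exact (proj2_sig (constructive_indefinite_description _ (unbounded_family_escapes h))). Qed.

Fixpoint cumulative_bound (n : nat) : nat -> nat :=
  match n with
  | O => fun _ => O
  | S m => fun x => cumulative_bound m x + B (escaping (cumulative_bound m)) x
  end.

Lemma cumulative_bound_ge k n x :
  k < n -> B (escaping (cumulative_bound k)) x <= cumulative_bound n x.
Proof. intros Hkn; induction Hkn; simpl; lia. Qed.

Lemma unbounded_family_injection : exists iota : nat -> I, forall n m, iota n = iota m -> n = m.
Proof.
exists (fun n => escaping (cumulative_bound n)).
assert (Hlt : forall n m, n < m -> escaping (cumulative_bound n) <> escaping (cumulative_bound m)).
{ intros n m Hnm E; apply (escaping_spec (cumulative_bound m)); rewrite <- E.
  exists 0; intros x _; apply cumulative_bound_ge, Hnm. }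
intros n m E; destruct (Nat.lt_trichotomy n m) as [c|[c|c]];
  [exfalso; exact (Hlt n m c E)|exact c|exfalso; exact (Hlt m n c (eq_sym E))].
Qed.

End UnboundedFamily.

Lemma sum_onto_triple (IB IX : Type) (iota : nat -> IB) (x0 : IX) :
  (forall n m, iota n = iota m -> n = m) ->
  exists phi : IB + IX -> IX * IB * IX, forall t, exists k, phi k = t.
Proof.
intros iota_inj.
destruct (hessenberg (IB + IX) (fun n => inl (iota n))) as [h Hh].
{ intros n m E; injection E; apply iota_inj. }
pose (toX (k : IB + IX) := match k with inl _ => x0 | inr i => i end).
pose (toB (k : IB + IX) := match k with inl b => b | inr _ => iota 0 end).
exists (fun k => (toX (fst (h k)), toB (fst (h (snd (h k)))), toX (snd (h (snd (h k)))))).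
intros [[i b] j]; destruct (Hh (inl b) (inr j)) as [w Hw], (Hh (inr i) w) as [k Hk].
exists k; rewrite Hk; simpl; rewrite Hw; reflexivity.
Qed.

Open Scope R_scope.

Lemma psum_S u n : psum u (S n) = psum u n + u n.
Proof. reflexivity. Qed.

Lemma psum_ext u v n : (forall k, (k < n)%nat -> u k = v k) -> psum u n = psum v n.
Proof.
induction n; intros H; simpl; [reflexivity|].
rewrite IHn by (intros; apply H; lia); rewrite H by lia; reflexivity.
Qed.

Lemma psum_opp u n : psum (fun k => - u k) n = - psum u n.
Proof. induction n; simpl; [lra|rewrite IHn; lra]. Qed.

Lemma psum_minus u v n : psum (fun k => u k - v k) n = psum u n - psum v n.
Proof. induction n; simpl; [lra|rewrite IHn; lra]. Qed.

Lemma psum_scal c u n : psum (fun k => c * u k) n = c * psum u n.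
Proof. induction n; simpl; [lra|rewrite IHn; lra]. Qed.

Lemma psum_diff_ext u v p q : (p <= q)%nat -> (forall k, (p <= k < q)%nat -> u k = v k) ->
  psum u q - psum u p = psum v q - psum v p.
Proof.
intros Hpq; induction Hpq; intros H; simpl; [lra|].
rewrite (H m) by lia; specialize (IHHpq (fun k Hk => H k ltac:(lia))); lra.
Qed.

Lemma psum_diff_le u v p q : (p <= q)%nat -> (forall k, (p <= k < q)%nat -> u k <= v k) ->
  psum u q - psum u p <= psum v q - psum v p.
Proof.
intros Hpq; induction Hpq; intros H; simpl; [lra|].
specialize (H m ltac:(lia)) as Hm; specialize (IHHpq (fun k Hk => H k ltac:(lia))); lra.
Qed.

Lemma psum_le u v n : (forall k, (k < n)%nat -> u k <= v k) -> psum u n <= psum v n.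
Proof.
intros H; pose proof (psum_diff_le u v 0 n ltac:(lia) (fun k Hk => H k ltac:(lia))).
simpl in *; lra.
Qed.

Lemma psum_mono u m n : (forall k, 0 <= u k) -> (m <= n)%nat -> psum u m <= psum u n.
Proof. intros H Hmn; induction Hmn; simpl; [lra|specialize (H m0); lra]. Qed.

Lemma psum_diff_abs_le u w p q : (p <= q)%nat ->
  (forall k, (p <= k < q)%nat -> Rabs (u k) <= w k) ->
  Rabs (psum u q - psum u p) <= psum w q - psum w p.
Proof.
intros Hpq H; apply Rabs_le; split.
- pose proof (psum_diff_le (fun k => - w k) u p q Hpq) as Hle; rewrite !psum_opp in Hle.
  enough (Hlow : forall k, (p <= k < q)%nat -> - w k <= u k) by (specialize (Hle Hlow); lra).
  intros k Hk; specialize (H k Hk); pose proof (Rle_abs (- u k)); rewrite Rabs_Ropp in *; lra.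
- apply psum_diff_le; [exact Hpq|]; intros k Hk; specialize (H k Hk).
  pose proof (Rle_abs (u k)); lra.
Qed.

Lemma psum_abs_le u n : Rabs (psum u n) <= psum (fun k => Rabs (u k)) n.
Proof.
pose proof (psum_diff_abs_le u (fun k => Rabs (u k)) 0 n ltac:(lia) (fun k _ => Rle_refl _)).
simpl in *; rewrite Rminus_0_r in *; lra.
Qed.

Lemma psum_stationary u N : (forall k, (N <= k)%nat -> u k = 0) ->
  forall n, (N <= n)%nat -> psum u n = psum u N.
Proof. intros H n Hn; induction Hn; [reflexivity|simpl; rewrite IHHn, H by lia; ring]. Qed.

Lemma psum_bound_nonneg x C : (forall n, Rabs (psum x n) <= C) -> 0 <= C.
Proof. intros H; specialize (H 0%nat); simpl in H; rewrite Rabs_R0 in H; exact H. Qed.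

Lemma cv_bounded s l : Un_cv s l -> exists C, forall n, Rabs (s n) <= C.
Proof.
intros Hs; destruct (cauchy_bound _ (CV_Cauchy _ (exist _ _ (cv_cvabs s l Hs)))) as [C HC].
exists C; intros n; apply HC; exists n; reflexivity.
Qed.

Definition unbounded_above (s : nat -> R) : Prop := forall M, exists n, M < s n.
Definition unbounded_below (s : nat -> R) : Prop := forall M, exists n, s n < M.

Lemma series_osc_of_unbounded s :
  unbounded_above (psum s) -> unbounded_below (psum s) -> series_osc s.
Proof.
intros Hup Hdown [p [Hp Huniq]].
assert (E1 : p = p_infty) by (apply Huniq; exact Hup).
assert (E2 : p = m_infty) by (apply Huniq; exact Hdown).
congruence.
Qed.

Definition restrict (X : nat -> Prop) (x : nat -> R) (k : nat) : R :=
  if decide (X k) then x k else 0.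
Definition subsum (X : nat -> Prop) (x : nat -> R) : nat -> R := psum (restrict X x).
Definition abssum (x : nat -> R) : nat -> R := psum (fun k => Rabs (x k)).

Lemma abssum_mono x m n : (m <= n)%nat -> abssum x m <= abssum x n.
Proof. intros; apply psum_mono; [intros; apply Rabs_pos|assumption]. Qed.

Lemma abssum_nonneg x n : 0 <= abssum x n.
Proof. apply (abssum_mono x 0 n); lia. Qed.

Lemma subsum_abs_le X x r : Rabs (subsum X x r) <= abssum x r.
Proof.
eapply Rle_trans; [apply psum_abs_le|apply psum_le].
intros k _; unfold restrict; destruct decide; [lra|rewrite Rabs_R0; apply Rabs_pos].
Qed.

Lemma subsum_compl X x r : subsum (fun k => ~ X k) x r = psum x r - subsum X x r.
Proof.
unfold subsum; rewrite <- psum_minus; apply psum_ext; intros k _.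
unfold restrict; destruct (decide (X k)), (decide (~ X k)); try tauto; lra.
Qed.

Lemma subsum_opp X x r : subsum X (fun k => - x k) r = - subsum X x r.
Proof.
unfold subsum; rewrite <- psum_opp; apply psum_ext; intros k _.
unfold restrict; destruct decide; lra.
Qed.

Lemma subsum_diff_ext X Y x p q : (p <= q)%nat -> (forall k, (p <= k < q)%nat -> (Y k <-> X k)) ->
  subsum Y x q - subsum Y x p = subsum X x q - subsum X x p.
Proof.
intros Hpq H; apply psum_diff_ext; [exact Hpq|]; intros k Hk.
unfold restrict; destruct (decide (Y k)), (decide (X k)); firstorder.
Qed.

Lemma subsum_gap X x p q : (p <= q)%nat -> (forall k, (p <= k < q)%nat -> ~ X k) ->
  subsum X x q = subsum X x p.
Proof.
intros Hpq; induction Hpq; intros H; [reflexivity|].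
unfold subsum in *; simpl; rewrite IHHpq by (intros; apply H; lia).
unfold restrict; destruct decide as [Xm|]; [exfalso; exact (H m ltac:(lia) Xm)|ring].
Qed.

Lemma subsum_bounded_of_finite X x n : (forall k, (n <= k)%nat -> ~ X k) ->
  forall r, Rabs (subsum X x r) <= abssum x n.
Proof.
intros H r; destruct (Nat.le_gt_cases r n) as [Hrn|Hnr].
- eapply Rle_trans; [apply subsum_abs_le|apply abssum_mono, Hrn].
- rewrite (subsum_gap X x n r) by (lia || (intros k Hk; apply H; lia)); apply subsum_abs_le.
Qed.

Definition infinite (X : nat -> Prop) : Prop := forall n, exists m, (n <= m)%nat /\ X m.

Lemma strict_mono_lt_iff (e : nat -> nat) : (forall n, (e n < e (S n))%nat) ->
  forall n m, (e n < e m)%nat <-> (n < m)%nat.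
Proof.
intros He.
assert (mono : forall n m, (n < m)%nat -> (e n < e m)%nat).
{ intros n m Hnm; induction Hnm; [apply He|pose proof (He m); lia]. }
intros n m; split; [|apply mono]; intros H.
destruct (Nat.lt_ge_cases n m) as [|Hmn]; [assumption|].
destruct (Nat.eq_dec n m) as [->|]; [lia|pose proof (mono m n ltac:(lia)); lia].
Qed.

Section Enumeration.
Variables (X : nat -> Prop) (e : nat -> nat).
Hypothesis He : is_enum X e.

Lemma enum_lt_iff n m : (e n < e m)%nat <-> (n < m)%nat.
Proof. exact (strict_mono_lt_iff e (proj1 He) n m). Qed.

Lemma enum_ge_id n : (n <= e n)%nat.
Proof. induction n; [lia|pose proof (proj1 He n); lia]. Qed.

Lemma enum_gap N k : (e N < k < e (S N))%nat -> ~ X k.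
Proof.
intros Hk Xk; apply (proj2 He) in Xk as [n <-].
rewrite !enum_lt_iff in Hk; lia.
Qed.

Lemma enum_before k : (k < e 0)%nat -> ~ X k.
Proof. intros Hk Xk; apply (proj2 He) in Xk as [n <-]; rewrite enum_lt_iff in Hk; lia. Qed.

Lemma subsum_enum x N : subsum X x (S (e N)) = psum (fun n => x (e n)) (S N).
Proof.
assert (Hx : forall n, restrict X x (e n) = x (e n)).
{ intros n; unfold restrict; destruct decide as [|NX]; [reflexivity|].
  exfalso; apply NX, (proj2 He); eauto. }
induction N.
- change (subsum X x (e 0) + restrict X x (e 0) = 0 + x (e 0)).
  rewrite Hx, (subsum_gap X x 0 (e 0)); [reflexivity|lia|].
  intros k Hk; apply enum_before; lia.
- change (subsum X x (e (S N)) + restrict X x (e (S N)) =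
    psum (fun n => x (e n)) (S N) + x (e (S N))).
  pose proof (proj1 He N).
  rewrite Hx, <- IHN, (subsum_gap X x (S (e N)) (e (S N))); [reflexivity|lia|].
  intros k Hk; apply (enum_gap N); lia.
Qed.

Lemma enum_cover r : (r <= e 0)%nat \/ exists N, (e N < r <= e (S N))%nat.
Proof.
induction r as [|r [Hr|[N HN]]]; [left; lia| |].
- destruct (Nat.eq_dec r (e 0)) as [->|]; [right|left; lia].
  exists 0%nat; pose proof (proj1 He 0%nat); lia.
- right; destruct (Nat.eq_dec r (e (S N))) as [->|].
  + exists (S N); pose proof (proj1 He (S N)); lia.
  + exists N; lia.
Qed.

Lemma subsum_enum_any x r : exists N, subsum X x r = psum (fun n => x (e n)) N.
Proof.
destruct (enum_cover r) as [Hr|[N HN]].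
- exists 0%nat; rewrite (subsum_gap X x 0 r); [reflexivity|lia|].
  intros k Hk; apply enum_before; lia.
- exists (S N); rewrite <- (subsum_enum x N); apply subsum_gap; [lia|].
  intros k Hk; apply (enum_gap N); lia.
Qed.

Lemma series_conv_of_subsum_cv x l : Un_cv (subsum X x) l -> series_conv (fun n => x (e n)).
Proof.
intros Hcv; exists l; intros eps Heps; destruct (Hcv eps Heps) as [N HN].
exists (S N); intros [|n] Hn; [lia|].
rewrite <- subsum_enum; apply HN; pose proof (enum_ge_id n); lia.
Qed.

Lemma series_osc_of_subsum_unbounded x :
  unbounded_above (subsum X x) -> unbounded_below (subsum X x) ->
  series_osc (fun n => x (e n)).
Proof.
intros Hup Hdown; apply series_osc_of_unbounded; intros M;
  [destruct (Hup M) as [r Hr]|destruct (Hdown M) as [r Hr]];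
  destruct (subsum_enum_any x r) as [N E]; exists N; rewrite <- E; exact Hr.
Qed.

End Enumeration.

Definition least_above (X : nat -> Prop) (n m : nat) : Prop :=
  (n <= m)%nat /\ X m /\ forall j, (n <= j)%nat -> X j -> (m <= j)%nat.

Definition next_in (X : nat -> Prop) (n : nat) : nat := epsilon (inhabits 0%nat) (least_above X n).

Lemma next_in_spec X n : infinite X -> least_above X n (next_in X n).
Proof.
intros HX; unfold next_in; apply epsilon_spec.
destruct (dec_inh_nat_subset_has_unique_least_element (fun m => (n <= m)%nat /\ X m))
  as [m [[[Hm Xm] Hleast] _]]; [intros m; apply classic|exact (HX n)|].
exists m; repeat split; auto.
Qed.

Fixpoint enumerate (X : nat -> Prop) (n : nat) : nat :=
  match n with
  | O => next_in X 0
  | S k => next_in X (S (enumerate X k))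
  end.

Lemma enumerate_is_enum X : infinite X -> is_enum X (enumerate X).
Proof.
intros HX.
assert (Hlt : forall n, (enumerate X n < enumerate X (S n))%nat)
  by (intros n; exact (proj1 (next_in_spec X _ HX))).
assert (Hge : forall n, (n <= enumerate X n)%nat) by (induction n; [lia|specialize (Hlt n); lia]).
split; [exact Hlt|intros m; split].
- intros Xm; enough (H : forall n, (m <= enumerate X n)%nat -> exists k, enumerate X k = m)
    by exact (H m (Hge m)).
  induction n; intros Hmn.
  + exists 0%nat; destruct (next_in_spec X 0%nat HX) as (_ & _ & Hmin).
    specialize (Hmin m ltac:(lia) Xm); simpl in *; lia.
  + destruct (Nat.le_gt_cases m (enumerate X n)) as [|Hmn']; [auto|].
    exists (S n); destruct (next_in_spec X (S (enumerate X n)) HX) as (_ & _ & Hmin).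
    specialize (Hmin m Hmn' Xm); simpl in *; lia.
- intros [[|n] <-]; exact (proj1 (proj2 (next_in_spec X _ HX))).
Qed.

Lemma sub_div_not_conv X a : infinite X -> sub_div X a ->
  ~ series_conv (fun n => qseq a (enumerate X n)).
Proof. intros HX Hd; exact (Hd _ (enumerate_is_enum X HX)). Qed.

Lemma psum_telescope v p q : (p <= q)%nat ->
  psum (fun k => v k - v (S k)) q - psum (fun k => v k - v (S k)) p = v p - v q.
Proof. intros H; induction H; simpl; lra. Qed.

Lemma abel_summation y v p q : (p <= q)%nat ->
  psum (fun k => y k * v k) q - psum (fun k => y k * v k) p =
  (psum y q - psum y p) * v q +
  (psum (fun k => (psum y (S k) - psum y p) * (v k - v (S k))) q -
   psum (fun k => (psum y (S k) - psum y p) * (v k - v (S k))) p).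
Proof. intros H; induction H; simpl in *; lra. Qed.

Section Dirichlet.
Variables (y v : nat -> R) (C : R).
Hypothesis y_bounded : forall n, Rabs (psum y n) <= C.
Hypothesis v_decr : forall n, v (S n) <= v n.
Hypothesis v_nonneg : forall n, 0 <= v n.

Lemma abel_tail_bound p q : (p <= q)%nat ->
  Rabs (psum (fun k => y k * v k) q - psum (fun k => y k * v k) p) <= 2 * C * v p.
Proof.
intros Hpq.
assert (HT : forall n, Rabs (psum y n - psum y p) <= 2 * C).
{ intros n; eapply Rle_trans; [apply Rabs_triang|]; rewrite Rabs_Ropp.
  pose proof (y_bounded n); pose proof (y_bounded p); lra. }
rewrite abel_summation by exact Hpq.
eapply Rle_trans; [apply Rabs_triang|].
assert (Hhead : Rabs ((psum y q - psum y p) * v q) <= 2 * C * v q).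
{ rewrite Rabs_mult, (Rabs_pos_eq (v q)) by apply v_nonneg.
  apply Rmult_le_compat_r; [apply v_nonneg|apply HT]. }
assert (Etel : psum (fun k => 2 * C * (v k - v (S k))) q - psum (fun k => 2 * C * (v k - v (S k))) p
  = 2 * C * (v p - v q)) by (rewrite !psum_scal, <- (psum_telescope v p q Hpq); ring).
assert (Htail := psum_diff_abs_le (fun k => (psum y (S k) - psum y p) * (v k - v (S k)))
  (fun k => 2 * C * (v k - v (S k))) p q Hpq).
rewrite Etel in Htail.
enough (Rabs (psum (fun k => (psum y (S k) - psum y p) * (v k - v (S k))) q -
  psum (fun k => (psum y (S k) - psum y p) * (v k - v (S k))) p) <= 2 * C * (v p - v q)) by lra.
apply Htail; intros k _; specialize (v_decr k).
rewrite Rabs_mult, (Rabs_pos_eq (v k - v (S k))) by lra.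
apply Rmult_le_compat_r; [lra|apply HT].
Qed.

Lemma dirichlet_test : Un_cv v 0 -> series_conv (fun k => y k * v k).
Proof.
intros Hv.
pose proof (psum_bound_nonneg y C y_bounded) as C0.
assert (Hcauchy : Cauchy_crit (psum (fun k => y k * v k))).
{ intros eps Heps; destruct (Hv (eps / (2 * C + 1))) as [N HN]; [apply Rdiv_lt_0_compat; lra|].
  assert (Hsmall : forall n, (N <= n)%nat -> 2 * C * v n < eps).
  { intros n Hn; specialize (HN n Hn); unfold R_dist in HN.
    rewrite Rminus_0_r, Rabs_pos_eq in HN by apply v_nonneg.
    apply (Rmult_lt_compat_l (2 * C + 1)) in HN; [|lra].
    replace ((2 * C + 1) * (eps / (2 * C + 1))) with eps in HN by (field; lra).
    pose proof (v_nonneg n); nra. }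
  exists N; intros n m Hn Hm; unfold R_dist.
  destruct (Nat.le_ge_cases n m) as [Hnm|Hmn].
  - rewrite <- Rabs_Ropp, Ropp_minus_distr.
    eapply Rle_lt_trans; [apply abel_tail_bound, Hnm|apply Hsmall, Hn].
  - eapply Rle_lt_trans; [apply abel_tail_bound, Hmn|apply Hsmall, Hm]. }
destruct (R_complete _ Hcauchy) as [l Hl]; exists l; exact Hl.
Qed.

End Dirichlet.

Lemma abel_dini p c : 0 < c -> (forall k, 0 <= p k) -> unbounded_above (psum p) ->
  unbounded_above (psum (fun k => p k / (c + psum p (S k)))).
Proof.
intros Hc Hp Hunb.
set (q k := p k / (c + psum p (S k))).
assert (Pnonneg : forall n, 0 <= psum p n) by (intros n; apply (psum_mono p 0 n Hp); lia).
assert (Hchunk : forall m n, (m <= n)%nat ->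
  (psum p n - psum p m) * / (c + psum p n) <= psum q n - psum q m).
{ intros m n Hmn.
  replace ((psum p n - psum p m) * / (c + psum p n)) with
    (psum (fun k => / (c + psum p n) * p k) n - psum (fun k => / (c + psum p n) * p k) m)
    by (rewrite !psum_scal; ring).
  apply psum_diff_le; [exact Hmn|]; intros k Hk; unfold q, Rdiv.
  rewrite (Rmult_comm (/ _) (p k)); apply Rmult_le_compat_l; [apply Hp|].
  pose proof (Pnonneg (S k)); apply Rinv_le_contravar; [lra|].
  pose proof (psum_mono p (S k) n Hp ltac:(lia)); lra. }
assert (Hgrow : forall j : nat, exists n, INR j / 2 <= psum q n).
{ induction j as [|j [m Hm]]; [exists 0%nat; simpl; lra|].
  destruct (Hunb (2 * psum p m + c)) as [n Hn].
  assert (Hmn : (m <= n)%nat).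
  { destruct (Nat.le_gt_cases m n) as [|Hnm]; [assumption|].
    pose proof (psum_mono p n m Hp ltac:(lia)); pose proof (Pnonneg m); lra. }
  exists n; specialize (Hchunk m n Hmn).
  assert (Hhalf : / 2 <= (psum p n - psum p m) * / (c + psum p n)).
  { pose proof (Pnonneg n); apply (Rmult_le_reg_r (c + psum p n)); [lra|].
    rewrite Rmult_assoc, Rinv_l, Rmult_1_r by lra; lra. }
  rewrite S_INR; lra. }
intros M; destruct (INR_unbounded (2 * M)) as [j Hj]; destruct (Hgrow j) as [n Hn].
exists n; lra.
Qed.

Lemma psum_one n : psum (fun _ => 1) n = INR n.
Proof. induction n; [reflexivity|rewrite S_INR; simpl; lra]. Qed.

Lemma harmonic_unbounded : unbounded_above (psum (fun k => / INR (S k))).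
Proof.
intros M; destruct (abel_dini (fun _ => 1) 1 Rlt_0_1 (fun _ => Rle_0_1)) with (M := M) as [n Hn].
{ intros M'; destruct (INR_unbounded M') as [n Hn]; exists n; rewrite psum_one; lra. }
exists n; eapply Rlt_le_trans; [exact Hn|]; apply psum_le; intros k _.
rewrite psum_one; unfold Rdiv; rewrite Rmult_1_l.
apply Rinv_le_contravar; [apply lt_0_INR; lia|lra].
Qed.

Definition weight (x : nat -> R) (k : nat) : R := / (1 + abssum x (S k)).

Lemma weight_pos x k : 0 < weight x k.
Proof. apply Rinv_0_lt_compat; pose proof (abssum_nonneg x (S k)); lra. Qed.

Lemma weight_le_1 x k : weight x k <= 1.
Proof.
rewrite <- Rinv_1; pose proof (abssum_nonneg x (S k)); apply Rinv_le_contravar; lra.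
Qed.

Lemma weight_decr x k : weight x (S k) <= weight x k.
Proof.
pose proof (abssum_nonneg x (S k)); pose proof (abssum_mono x (S k) (S (S k)) ltac:(lia)).
apply Rinv_le_contravar; lra.
Qed.

Lemma weight_opp x k : weight (fun i => - x i) k = weight x k.
Proof.
unfold weight, abssum; do 2 f_equal; apply psum_ext; intros; apply Rabs_Ropp.
Qed.

Lemma abssum_pos_part x n : abssum x n = 2 * psum (fun k => Rmax (x k) 0) n - psum x n.
Proof.
unfold abssum; rewrite <- psum_scal, <- psum_minus; apply psum_ext; intros k _.
unfold Rmax; destruct Rle_dec; [rewrite Rabs_left1|rewrite Rabs_right]; lra.
Qed.

Lemma Rmax_scal_pos r w : 0 < w -> Rmax (r * w) 0 = w * Rmax r 0.
Proof. intros Hw; unfold Rmax; destruct (Rle_dec (r * w) 0), (Rle_dec r 0); nra. Qed.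

Lemma psum_neg_part x n : psum (fun k => Rmin (x k) 0) n = - psum (fun k => Rmax (- x k) 0) n.
Proof.
rewrite <- psum_opp; apply psum_ext; intros k _.
unfold Rmin, Rmax; destruct (Rle_dec (x k) 0), (Rle_dec (- x k) 0); lra.
Qed.

Section Weights.
Variables (x : nat -> R) (C : R).
Hypothesis x_bounded : forall n, Rabs (psum x n) <= C.
Hypothesis pos_unbounded : unbounded_above (psum (fun k => Rmax (x k) 0)).

Lemma weight_cv0 : Un_cv (weight x) 0.
Proof.
intros eps Heps; destruct (pos_unbounded (/ eps)) as [N HN]; exists N; intros n Hn.
unfold R_dist; rewrite Rminus_0_r, Rabs_pos_eq by apply Rlt_le, weight_pos.
assert (Habs : / eps < abssum x (S n)).
{ eapply Rlt_le_trans; [exact HN|]; eapply Rle_trans; [|apply (abssum_mono x N (S n)); lia].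
  apply psum_le; intros k _; unfold Rmax; destruct Rle_dec; [apply Rabs_pos|apply Rle_abs]. }
pose proof (abssum_nonneg x (S n)).
unfold weight; rewrite <- (Rinv_inv eps); apply Rinv_lt_contravar; [|lra].
apply Rmult_lt_0_compat; [apply Rinv_0_lt_compat, Heps|lra].
Qed.

(* Since [1 + abssum x (S k) <= 1 + C + 2 * psum (positive part of x) (S k)], the weighted
   positive parts dominate half the terms of Abel-Dini's divergent series. *)
Lemma weighted_pos_unbounded : unbounded_above (psum (fun k => Rmax (x k * weight x k) 0)).
Proof.
pose proof (psum_bound_nonneg x C x_bounded) as C0.
set (P := psum (fun k => Rmax (x k) 0)).
intros M; destruct (abel_dini (fun k => Rmax (x k) 0) ((1 + C) / 2) ltac:(lra)
  (fun k => Rmax_r _ _) pos_unbounded (2 * M)) as [n Hn].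
exists n; fold P in Hn.
enough (psum (fun k => Rmax (x k) 0 / ((1 + C) / 2 + P (S k))) n <=
  2 * psum (fun k => Rmax (x k * weight x k) 0) n) by lra.
rewrite <- psum_scal; apply psum_le; intros k _.
rewrite Rmax_scal_pos by apply weight_pos; unfold weight, Rdiv.
pose proof (abssum_pos_part x (S k)) as E; fold P in E.
pose proof (abssum_nonneg x (S k)); pose proof (Rmax_r (x k) 0).
pose proof (Rle_abs (- psum x (S k))); rewrite Rabs_Ropp in *; specialize (x_bounded (S k)).
assert (Hinv : / ((1 + C) / 2 + P (S k)) <= 2 * / (1 + abssum x (S k))).
{ replace (2 * / (1 + abssum x (S k))) with (/ ((1 + abssum x (S k)) / 2)) by (field; lra).
  apply Rinv_le_contravar; lra. }
nra.
Qed.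

End Weights.

Fixpoint qsum (u : nat -> Q) (n : nat) : Q :=
  match n with O => 0%Q | S k => (qsum u k + u k)%Q end.

Lemma Q2R_qsum u n : Q2R (qsum u n) = psum (fun k => Q2R (u k)) n.
Proof. induction n; simpl; [unfold Q2R; simpl; lra|rewrite Q2R_plus, IHn; reflexivity]. Qed.

Lemma Q2R_Qabs q : Q2R (Qabs q) = Rabs (Q2R q).
Proof.
destruct (Qlt_le_dec q 0) as [Hq|Hq].
- rewrite (Qeq_eqR _ _ (Qabs_neg q (Qlt_le_weak _ _ Hq))), Q2R_opp.
  apply Qlt_Rlt in Hq; unfold Q2R at 2 in Hq; simpl in Hq; rewrite Rabs_left; lra.
- rewrite (Qeq_eqR _ _ (Qabs_pos q Hq)).
  apply Qle_Rle in Hq; unfold Q2R at 1 in Hq; simpl in Hq; rewrite Rabs_right; lra.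
Qed.

Definition damp (a : nat -> Q) (k : nat) : Q :=
  (a k / (1 + qsum (fun j => Qabs (a j)) (S k)))%Q.

Lemma qseq_damp a k : qseq (damp a) k = qseq a k * weight (qseq a) k.
Proof.
assert (E : Q2R (1 + qsum (fun j => Qabs (a j)) (S k)) = 1 + abssum (qseq a) (S k)).
{ rewrite Q2R_plus, Q2R_qsum; unfold abssum; f_equal; [unfold Q2R; simpl; lra|].
  apply psum_ext; intros; apply Q2R_Qabs. }
unfold qseq, damp, weight; rewrite Q2R_div, E; [reflexivity|].
intros H; apply Qeq_eqR in H; rewrite E in H; unfold Q2R in H; simpl in H.
pose proof (abssum_nonneg (qseq a) (S k)); lra.
Qed.

Lemma Scc_damp a : Scc a -> Scc (damp a).
Proof.
intros (H0 & [l Hl] & Hpos & Hneg); destruct (cv_bounded _ _ Hl) as [C HC].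
set (x := qseq a) in *.
assert (Hpos' : unbounded_above (psum (fun k => Rmax (- x k) 0))).
{ intros M; destruct (Hneg (- M)) as [n Hn]; exists n; rewrite psum_neg_part in Hn; lra. }
assert (HC' : forall n, Rabs (psum (fun k => - x k) n) <= C)
  by (intros n; rewrite psum_opp, Rabs_Ropp; apply HC).
unfold Scc; replace (qseq (damp a)) with (fun k => x k * weight x k)
  by (extensionality k; symmetry; apply qseq_damp).
split; [|split; [|split]].
- intros eps Heps; destruct (H0 eps Heps) as [N HN]; exists N; intros n Hn.
  specialize (HN n Hn); unfold R_dist in *; rewrite Rminus_0_r in *.
  rewrite Rabs_mult, (Rabs_pos_eq (weight x n)) by apply Rlt_le, weight_pos.
  pose proof (weight_le_1 x n); pose proof (weight_pos x n); pose proof (Rabs_pos (x n)); nra.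
- apply (dirichlet_test x (weight x) C HC (weight_decr x) (fun k => Rlt_le _ _ (weight_pos x k))).
  exact (weight_cv0 x Hpos).
- exact (weighted_pos_unbounded x C HC Hpos).
- intros M; destruct (weighted_pos_unbounded _ C HC' Hpos' (- M)) as [n Hn]; exists n.
  rewrite psum_neg_part; erewrite psum_ext;
    [apply Ropp_lt_cancel; rewrite Ropp_involutive; exact Hn|].
  intros k _; cbv beta; rewrite weight_opp; f_equal; ring.
Qed.

Lemma subsum_unbounded_of_sub_div_damp a X : Scc a -> infinite X -> sub_div X (damp a) ->
  unbounded_above (subsum X (qseq a)) \/ unbounded_below (subsum X (qseq a)).
Proof.
intros Ha HX Hd; apply NNPP; intros [Hup Hdown]%not_or_and.
apply not_all_ex_not in Hup as [M1 Hup]; apply not_all_ex_not in Hdown as [M2 Hdown].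
set (x := qseq a) in *.
assert (Hbound : forall r, Rabs (psum (restrict X x) r) <= Rabs M1 + Rabs M2).
{ intros r; apply Rabs_le.
  assert (subsum X x r <= M1) by (apply Rnot_lt_le; intro; apply Hup; eauto).
  assert (M2 <= subsum X x r) by (apply Rnot_lt_le; intro; apply Hdown; eauto).
  unfold subsum in *; pose proof (Rle_abs M1); pose proof (Rle_abs (- M2)); rewrite Rabs_Ropp in *.
  pose proof (Rabs_pos M1); pose proof (Rabs_pos M2); lra. }
destruct Ha as (_ & _ & Hpos & _).
destruct (dirichlet_test (restrict X x) (weight x) _ Hbound (weight_decr x)
  (fun k => Rlt_le _ _ (weight_pos x k)) (weight_cv0 x Hpos)) as [l Hl].
apply (sub_div_not_conv X (damp a) HX Hd).
apply (series_conv_of_subsum_cv X _ (enumerate_is_enum X HX) _ l).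
replace (subsum X (qseq (damp a))) with (psum (fun k => restrict X x k * weight x k)); [exact Hl|].
extensionality r; apply psum_ext; intros k _; unfold restrict; rewrite qseq_damp.
destruct decide; [reflexivity|ring].
Qed.

Definition alt_harmonic (k : nat) : Q :=
  Qmake (if Nat.even k then 1 else -1)%Z (Pos.of_succ_nat (Nat.div2 k)).

Lemma IZR_of_succ_nat j : IZR (Zpos (Pos.of_succ_nat j)) = INR (S j).
Proof. rewrite Zpos_P_of_succ_nat, INR_IZR_INZ, Nat2Z.inj_succ; reflexivity. Qed.

Lemma alt_harmonic_even j : qseq alt_harmonic (2 * j) = / INR (S j).
Proof.
unfold qseq, alt_harmonic, Q2R; rewrite Nat.even_mul, Nat.div2_double; simpl Qnum; simpl Qden.
rewrite IZR_of_succ_nat; ring.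
Qed.

Lemma alt_harmonic_odd j : qseq alt_harmonic (S (2 * j)) = - / INR (S j).
Proof.
unfold qseq, alt_harmonic, Q2R; rewrite Nat.even_succ, Nat.odd_mul, Nat.div2_succ_double.
simpl Qnum; simpl Qden; rewrite IZR_of_succ_nat; ring.
Qed.

Lemma inv_INR_pos j : 0 < / INR (S j).
Proof. apply Rinv_0_lt_compat, lt_0_INR; lia. Qed.

Lemma inv_INR_cv0 eps : 0 < eps -> exists N, forall j, (N <= j)%nat -> / INR (S j) < eps.
Proof.
intros Heps; destruct (archimed_cor1 eps Heps) as [N [HN HN0]]; exists N; intros j Hj.
eapply Rle_lt_trans; [|exact HN]; apply Rinv_le_contravar; [apply lt_0_INR; lia|apply le_INR; lia].
Qed.

Lemma even_odd_cases n : n = (2 * Nat.div2 n)%nat \/ n = S (2 * Nat.div2 n).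
Proof. pose proof (Nat.div2_odd n); destruct (Nat.odd n); simpl in *; lia. Qed.

Lemma alt_harmonic_psum j :
  psum (qseq alt_harmonic) (2 * j) = 0 /\ psum (qseq alt_harmonic) (S (2 * j)) = / INR (S j).
Proof.
induction j as [|j [IH1 IH2]].
- split; [reflexivity|].
  change (0 + qseq alt_harmonic (2 * 0) = / INR (S 0)); rewrite alt_harmonic_even; ring.
- assert (Heven : psum (qseq alt_harmonic) (2 * S j) = 0).
  { replace (2 * S j)%nat with (S (S (2 * j))) by lia.
    rewrite psum_S, IH2, alt_harmonic_odd; ring. }
  split; [exact Heven|]; rewrite psum_S, Heven, alt_harmonic_even; ring.
Qed.

Lemma alt_harmonic_parts j :
  psum (fun k => Rmax (qseq alt_harmonic k) 0) (2 * j) = psum (fun k => / INR (S k)) j /\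
  psum (fun k => Rmin (qseq alt_harmonic k) 0) (2 * j) = - psum (fun k => / INR (S k)) j.
Proof.
induction j as [|j [IH1 IH2]]; [simpl; split; lra|].
replace (2 * S j)%nat with (S (S (2 * j))) by lia; rewrite !psum_S, IH1, IH2.
rewrite alt_harmonic_even, alt_harmonic_odd; pose proof (inv_INR_pos j).
rewrite Rmax_left, Rmax_right, Rmin_right, Rmin_left by lra; split; ring.
Qed.

Lemma Scc_alt_harmonic : Scc alt_harmonic.
Proof.
split; [|split; [|split]].
- intros eps Heps; destruct (inv_INR_cv0 eps Heps) as [N HN]; exists (2 * N)%nat; intros n Hn.
  unfold R_dist; rewrite Rminus_0_r.
  destruct (even_odd_cases n) as [E|E]; rewrite E;
    [rewrite alt_harmonic_even|rewrite alt_harmonic_odd, Rabs_Ropp];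
    rewrite Rabs_pos_eq by apply Rlt_le, inv_INR_pos; apply HN; lia.
- exists 0; intros eps Heps; destruct (inv_INR_cv0 eps Heps) as [N HN]; exists (2 * N)%nat.
  intros n Hn; unfold R_dist; rewrite Rminus_0_r.
  destruct (even_odd_cases n) as [E|E]; rewrite E;
    [rewrite (proj1 (alt_harmonic_psum _)), Rabs_R0; exact Heps|].
  rewrite (proj2 (alt_harmonic_psum _)), Rabs_pos_eq by apply Rlt_le, inv_INR_pos; apply HN; lia.
- intros M; destruct (harmonic_unbounded M) as [j Hj]; exists (2 * j)%nat.
  rewrite (proj1 (alt_harmonic_parts j)); exact Hj.
- intros M; destruct (harmonic_unbounded (- M)) as [j Hj]; exists (2 * j)%nat.
  rewrite (proj2 (alt_harmonic_parts j)); lra.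
Qed.

Fixpoint count_in (L : nat -> Prop) (n : nat) : nat :=
  match n with
  | O => O
  | S m => if decide (L m) then S (count_in L m) else count_in L m
  end.

Definition spread (L : nat -> Prop) (z : nat -> Q) (n : nat) : Q :=
  if decide (L n) then z (count_in L n) else 0%Q.

Lemma count_in_mono L m n : (m <= n)%nat -> (count_in L m <= count_in L n)%nat.
Proof. intros H; induction H; [lia|simpl; destruct decide; lia]. Qed.

Lemma count_in_unbounded L : infinite L -> forall j, exists N, (j <= count_in L N)%nat.
Proof.
intros HL j; induction j as [|j [N HN]]; [exists 0%nat; lia|].
destruct (HL N) as [m [Hm Lm]]; exists (S m); simpl; destruct decide; [|contradiction].
pose proof (count_in_mono L N m Hm); lia.
Qed.

Lemma count_in_hits L : infinite L -> forall j, exists n, count_in L n = j.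
Proof.
intros HL j; destruct (count_in_unbounded L HL j) as [N HN]; revert HN.
induction N; intros HN; [exists 0%nat; simpl in *; lia|].
destruct (Nat.eq_dec (count_in L (S N)) j) as [|ne]; [eauto|].
apply IHN; simpl in *; destruct decide; lia.
Qed.

Lemma psum_spread L z (h : R -> R) : h 0 = 0 -> forall n,
  psum (fun k => h (qseq (spread L z) k)) n = psum (fun j => h (qseq z j)) (count_in L n).
Proof.
intros h0 n; induction n; [reflexivity|]; simpl; rewrite IHn.
unfold qseq, spread; destruct decide; [reflexivity|].
replace (Q2R 0) with 0 by (unfold Q2R; simpl; ring); rewrite h0; ring.
Qed.

Lemma Scc_spread L z : infinite L -> Scc z -> Scc (spread L z).
Proof.
intros HL (H0 & [l Hl] & Hpos & Hneg).
assert (Hev : forall J, exists N, forall n, (N <= n)%nat -> (J <= count_in L n)%nat).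
{ intros J; destruct (count_in_unbounded L HL J) as [N HN]; exists N; intros n Hn.
  pose proof (count_in_mono L N n Hn); lia. }
split; [|split; [|split]].
- intros eps Heps; destruct (H0 eps Heps) as [J HJ], (Hev J) as [N HN]; exists N; intros n Hn.
  unfold qseq, spread; destruct decide; [apply HJ, HN, Hn|].
  unfold R_dist, Q2R; simpl; rewrite Rmult_0_l, Rminus_0_r, Rabs_R0; exact Heps.
- exists l; intros eps Heps; destruct (Hl eps Heps) as [J HJ], (Hev J) as [N HN]; exists N.
  intros n Hn; replace (psum (qseq (spread L z)) n) with (psum (qseq z) (count_in L n))
    by (symmetry; exact (psum_spread L z (fun t => t) eq_refl n)).
  apply HJ, HN, Hn.
- intros M; destruct (Hpos M) as [j Hj], (count_in_hits L HL j) as [n Hn]; exists n.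
  rewrite (psum_spread L z (fun t => Rmax t 0)), Hn; [exact Hj|apply Rmax_right; lra].
- intros M; destruct (Hneg M) as [j Hj], (count_in_hits L HL j) as [n Hn]; exists n.
  rewrite (psum_spread L z (fun t => Rmin t 0)), Hn; [exact Hj|apply Rmin_right; lra].
Qed.

Lemma not_infinite P : ~ infinite P -> exists N, forall m, (N <= m)%nat -> ~ P m.
Proof.
intros H; apply not_all_ex_not in H as [N HN]; exists N; intros m Hm Pm; apply HN; eauto.
Qed.

Lemma subsum_eventually_const X x N : (forall k, (N <= k)%nat -> X k -> x k = 0) ->
  forall n, (N <= n)%nat -> subsum X x n = subsum X x N.
Proof.
intros H; apply psum_stationary; intros k Hk; unfold restrict.
destruct decide as [Xk|]; [exact (H k Hk Xk)|reflexivity].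
Qed.

Lemma sub_div_meets_both (b : nat -> Q) (L X : nat -> Prop) : series_conv (qseq b) ->
  (forall k, ~ L k -> qseq b k = 0) -> infinite X -> sub_div X b ->
  infinite (fun m => L m /\ X m) /\ infinite (fun m => L m /\ ~ X m).
Proof.
intros [l Hl] Hoff HX Hd.
assert (Hnc : forall l', ~ Un_cv (subsum X (qseq b)) l').
{ intros l' H; exact (sub_div_not_conv X b HX Hd
    (series_conv_of_subsum_cv X _ (enumerate_is_enum X HX) _ l' H)). }
assert (Hzero : forall P k, ~ (L k /\ P k) -> P k -> qseq b k = 0)
  by (intros P k Hk Pk; apply Hoff; intros Lk; apply Hk; split; assumption).
split; apply NNPP; intros [N HN]%not_infinite.
- apply (Hnc (subsum X (qseq b) N)); intros eps Heps; exists N; intros n Hn.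
  rewrite (subsum_eventually_const X _ N) by (assumption || (intros k Hk; apply Hzero, HN, Hk)).
  unfold R_dist; rewrite Rminus_diag, Rabs_R0; exact Heps.
- apply (Hnc (l - subsum (fun k => ~ X k) (qseq b) N)); intros eps Heps.
  destruct (Hl eps Heps) as [N1 HN1]; exists (Nat.max N N1); intros n Hn.
  assert (Hc : subsum (fun k => ~ X k) (qseq b) n = subsum (fun k => ~ X k) (qseq b) N).
  { apply subsum_eventually_const; [intros k Hk; exact (Hzero (fun k => ~ X k) k (HN k Hk))|lia]. }
  rewrite subsum_compl in Hc; unfold R_dist.
  replace (subsum X (qseq b) n - (l - subsum (fun k => ~ X k) (qseq b) N))
    with (psum (qseq b) n - l) by lra.
  apply HN1; lia.
Qed.

Fixpoint runmax (f : nat -> nat) (n : nat) : nat :=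
  match n with O => f O | S m => Nat.max (runmax f m) (f (S m)) end.

Lemma runmax_ge f x y : (y <= x)%nat -> (f y <= runmax f x)%nat.
Proof.
induction x; intros Hyx; simpl; [replace y with 0%nat by lia; lia|].
destruct (Nat.eq_dec y (S x)) as [->|]; [lia|specialize (IHx ltac:(lia)); lia].
Qed.

(* Block [m] is [[block_start f m, block_start f (S m))]; its end exceeds [f k] for every
   [k] up to its start. *)
Fixpoint block_start (f : nat -> nat) (m : nat) : nat :=
  match m with O => O | S j => runmax f (block_start f j) + block_start f j + 1 end.

Lemma block_start_lt_iff f m m' : (block_start f m < block_start f m')%nat <-> (m < m')%nat.
Proof. apply strict_mono_lt_iff; intros n; simpl; lia. Qed.

Lemma block_start_ge_id f m : (m <= block_start f m)%nat.
Proof. induction m; simpl; lia. Qed.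

Fixpoint block (f : nat -> nat) (n : nat) : nat :=
  match n with
  | O => O
  | S n' => if Nat.leb (block_start f (S (block f n'))) (S n') then S (block f n') else block f n'
  end.

Lemma block_spec f n : (block_start f (block f n) <= n < block_start f (S (block f n)))%nat.
Proof.
induction n; [simpl; lia|].
cbn [block]; destruct (Nat.leb (block_start f (S (block f n))) (S n)) eqn:E.
- apply Nat.leb_le in E.
  pose proof (proj2 (block_start_lt_iff f (S (block f n)) (S (S (block f n)))) ltac:(lia)); lia.
- apply Nat.leb_gt in E; lia.
Qed.

Lemma block_unique f n m : (block_start f m <= n < block_start f (S m))%nat -> block f n = m.
Proof.
intros Hn; pose proof (block_spec f n); apply Nat.le_antisymm; apply Nat.lt_succ_r;
  apply (block_start_lt_iff f); lia.
Qed.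

Lemma block_ge f n N : (block_start f N <= n)%nat -> (N <= block f n)%nat.
Proof.
intros Hn; pose proof (block_spec f n); apply Nat.lt_succ_r, (block_start_lt_iff f); lia.
Qed.

Definition fits (G f : nat -> nat) (m : nat) : Prop :=
  (G (block_start f m) <= block_start f (S m))%nat.

Definition threshold (G : nat -> nat) (n : nat) : nat := runmax G (runmax G n).

Definition flip (X : nat -> Prop) (f : nat -> nat) (X' : nat -> Prop) (n : nat) : Prop :=
  X n <-> ~ X' (block f n).

Lemma escapes_of_not_le_star f g :
  ~ le_star f g -> forall N, exists n, (N <= n)%nat /\ (g n < f n)%nat.
Proof.
intros H N; apply NNPP; intros Hno; apply H; exists N; intros n Hn.
apply Nat.nlt_ge; intros Hlt; apply Hno; eauto.
Qed.

(* If [f n] beats [threshold G n] inside block [m], then block [m] or block [m + 1] fits. *)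
Lemma fits_infinite G f : ~ le_star f (threshold G) -> infinite (fits G f).
Proof.
intros Hf N; destruct (escapes_of_not_le_star _ _ Hf (block_start f N)) as [n [Hn Hfn]].
set (m := block f n); pose proof (block_spec f n) as Hm; fold m in Hm.
assert (HmN : (N <= m)%nat) by (apply block_ge, Hn).
assert (Hf2 : (f n <= block_start f (S (S m)))%nat).
{ pose proof (runmax_ge f (block_start f (S m)) n ltac:(lia)); simpl in *; lia. }
destruct (Nat.le_gt_cases (G (block_start f m)) (block_start f (S m))) as [Hfit|Hnofit].
- exists m; split; assumption.
- exists (S m); split; [lia|unfold fits].
  assert (G (block_start f m) <= runmax G n)%nat by (apply runmax_ge; lia).
  assert (G (block_start f (S m)) <= threshold G n)%nat by (apply runmax_ge; lia).
  lia.
Qed.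

Lemma block_of_fits G f m k : fits G f m ->
  (block_start f m <= k < G (block_start f m))%nat -> block f k = m.
Proof. intros Hfit Hk; apply block_unique; unfold fits in Hfit; lia. Qed.

Section Oscillation.
Variables (x : nat -> R) (C : R) (X : nat -> Prop).
Hypothesis x_bounded : forall n, Rabs (psum x n) <= C.
Hypothesis X_unbounded : unbounded_above (subsum X x).

(* Enough to outweigh the partial sum up to [p], plus a margin of [p]; the [2 * C] absorbs
   the total sum over a block when [X] is complemented there. *)
Definition gain (p : nat) : R := abssum x p + 2 * C + INR p.

Lemma gain_reached p : exists q, (p < q)%nat /\ gain p <= subsum X x q - subsum X x p.
Proof.
destruct (X_unbounded (abssum x p + gain p)) as [q Hq]; exists q.
pose proof (subsum_abs_le X x p); pose proof (Rle_abs (subsum X x p)).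
assert (gain p >= 0) by (unfold gain; pose proof (abssum_nonneg x p); pose proof (pos_INR p);
  pose proof (psum_bound_nonneg x C x_bounded); lra).
split; [|lra].
apply Nat.nle_gt; intros Hqp; pose proof (subsum_abs_le X x q).
pose proof (abssum_mono x q p Hqp); pose proof (Rle_abs (subsum X x q)); lra.
Qed.

Variable G : nat -> nat.
Hypothesis G_spec : forall p, (p < G p)%nat /\ gain p <= subsum X x (G p) - subsum X x p.
Variables (f : nat -> nat) (X' : nat -> Prop).

Lemma flip_high m : fits G f m -> ~ X' m ->
  INR (block_start f m) <= subsum (flip X f X') x (G (block_start f m)).
Proof.
intros Hfit HX'; set (p := block_start f m); destruct (G_spec p) as [Hp Hg].
assert (E : subsum (flip X f X') x (G p) - subsum (flip X f X') x p =
  subsum X x (G p) - subsum X x p).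
{ apply subsum_diff_ext; [lia|]; intros k Hk; unfold flip.
  rewrite (block_of_fits G f m k Hfit Hk); tauto. }
pose proof (subsum_abs_le (flip X f X') x p); pose proof (Rle_abs (- subsum (flip X f X') x p)).
rewrite Rabs_Ropp in *; pose proof (psum_bound_nonneg x C x_bounded); unfold gain in Hg; lra.
Qed.

Lemma flip_low m : fits G f m -> X' m ->
  subsum (flip X f X') x (G (block_start f m)) <= - INR (block_start f m).
Proof.
intros Hfit HX'; set (p := block_start f m); destruct (G_spec p) as [Hp Hg].
assert (E : subsum (flip X f X') x (G p) - subsum (flip X f X') x p =
  subsum (fun k => ~ X k) x (G p) - subsum (fun k => ~ X k) x p).
{ apply subsum_diff_ext; [lia|]; intros k Hk; unfold flip.
  rewrite (block_of_fits G f m k Hfit Hk); tauto. }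
rewrite !subsum_compl in E.
pose proof (subsum_abs_le (flip X f X') x p); pose proof (Rle_abs (subsum (flip X f X') x p)).
pose proof (x_bounded (G p)); pose proof (x_bounded p).
pose proof (Rle_abs (psum x (G p))); pose proof (Rle_abs (- psum x p)); rewrite Rabs_Ropp in *.
unfold gain in Hg; lra.
Qed.

Lemma flip_unbounded :
  infinite (fun m => fits G f m /\ X' m) -> infinite (fun m => fits G f m /\ ~ X' m) ->
  unbounded_above (subsum (flip X f X') x) /\ unbounded_below (subsum (flip X f X') x).
Proof.
intros Hin Hout; split; intros M.
- destruct (INR_unbounded M) as [N HN], (Hout N) as [m [Hm [Hfit HX']]].
  exists (G (block_start f m)); pose proof (flip_high m Hfit HX').
  pose proof (le_INR _ _ (Nat.le_trans _ _ _ Hm (block_start_ge_id f m))); lra.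
- destruct (INR_unbounded (- M)) as [N HN], (Hin N) as [m [Hm [Hfit HX']]].
  exists (G (block_start f m)); pose proof (flip_low m Hfit HX').
  pose proof (le_INR _ _ (Nat.le_trans _ _ _ Hm (block_start_ge_id f m))); lra.
Qed.

End Oscillation.

Lemma flip_witness x C X : (forall n, Rabs (psum x n) <= C) ->
  unbounded_above (subsum X x) \/ unbounded_below (subsum X x) ->
  exists G, forall f X',
    infinite (fun m => fits G f m /\ X' m) -> infinite (fun m => fits G f m /\ ~ X' m) ->
    unbounded_above (subsum (flip X f X') x) /\ unbounded_below (subsum (flip X f X') x).
Proof.
assert (Hup : forall y, (forall n, Rabs (psum y n) <= C) -> unbounded_above (subsum X y) ->
  exists G, forall f X',
    infinite (fun m => fits G f m /\ X' m) -> infinite (fun m => fits G f m /\ ~ X' m) ->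
    unbounded_above (subsum (flip X f X') y) /\ unbounded_below (subsum (flip X f X') y)).
{ intros y Hb Hu.
  exists (fun p => epsilon (inhabits 0%nat)
    (fun q => (p < q)%nat /\ gain y C p <= subsum X y q - subsum X y p)).
  intros f X'; apply (flip_unbounded y C X Hb); intros p.
  apply epsilon_spec, (gain_reached y C X Hb Hu p). }
intros Hb [Hu|Hd]; [exact (Hup x Hb Hu)|].
destruct (Hup (fun k => - x k)) as [G HG].
- intros n; rewrite psum_opp, Rabs_Ropp; apply Hb.
- intros M; destruct (Hd (- M)) as [r Hr]; exists r; rewrite subsum_opp; lra.
- exists G; intros f X' Hin Hout; destruct (HG f X' Hin Hout) as [H1 H2].
  split; intros M; [destruct (H2 (- M)) as [r Hr]|destruct (H1 (- M)) as [r Hr]];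
    exists r; rewrite subsum_opp in Hr; lra.
Qed.

Lemma infcoinf_of_subsum_unbounded x C Y : (forall n, Rabs (psum x n) <= C) ->
  unbounded_above (subsum Y x) -> infcoinf Y.
Proof.
intros Hb Hu; split; apply NNPP; intros [n Hn]%not_infinite.
- destruct (Hu (abssum x n)) as [r Hr].
  pose proof (subsum_bounded_of_finite Y x n Hn r); pose proof (Rle_abs (subsum Y x r)); lra.
- destruct (Hu (C + abssum x n)) as [r Hr].
  pose proof (subsum_bounded_of_finite (fun k => ~ Y k) x n Hn r) as Hc; rewrite subsum_compl in Hc.
  pose proof (Hb r); pose proof (Rle_abs (psum x r));
  pose proof (Rle_abs (- (psum x r - subsum Y x r))); rewrite Rabs_Ropp in *; lra.
Qed.

Lemma spread_off L z k : ~ L k -> qseq (spread L z) k = 0.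
Proof.
intros Hk; unfold qseq, spread; destruct decide; [contradiction|unfold Q2R; simpl; ring].
Qed.

Lemma flip_oscillates a X : Scc a -> infinite X -> sub_div X (damp a) ->
  exists G, forall f X', ~ le_star f (threshold G) -> infinite X' ->
    sub_div X' (spread (fits G f) alt_harmonic) ->
    infcoinf (flip X f X') /\ sub_osc (flip X f X') a.
Proof.
intros Ha HX Hd; pose proof Ha as (_ & [l Hl] & _); destruct (cv_bounded _ _ Hl) as [C HC].
destruct (flip_witness (qseq a) C X HC (subsum_unbounded_of_sub_div_damp a X Ha HX Hd)) as [G HG].
exists G; intros f X' Hf HX' Hd'.
pose proof (Scc_spread _ _ (fits_infinite G f Hf) Scc_alt_harmonic) as (_ & Hconv & _).
destruct (sub_div_meets_both _ (fits G f) X' Hconv (spread_off _ _) HX' Hd') as [Hin Hout].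
destruct (HG f X' Hin Hout) as [Hup Hdown]; split.
- exact (infcoinf_of_subsum_unbounded _ C _ HC Hup).
- intros e He; exact (series_osc_of_subsum_unbounded _ e He _ Hup Hdown).
Qed.

Definition evens (n : nat) : Prop := Nat.even n = true.

Lemma evens_infcoinf : infcoinf evens.
Proof.
split; intros n; [exists (2 * n)%nat|exists (S (2 * n))]; split; try lia; unfold evens.
- rewrite Nat.even_mul; reflexivity.
- rewrite Nat.even_succ, Nat.odd_mul; discriminate.
Qed.

Lemma ss_o_le_max_b_ss_io (IB : Type) (B : IB -> nat -> nat) (IX : Type) (X : IX -> nat -> Prop) :
  unbounded_family B -> (forall i, infcoinf (X i)) ->
  (forall a, Scc a -> exists i, sub_div (X i) a) ->
  exists Y : (IB + IX)%type -> nat -> Prop,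
    (forall j, infcoinf (Y j)) /\ (forall a, Scc a -> exists j, sub_osc (Y j) a).
Proof.
intros HB HXic HXdiv.
destruct (unbounded_family_injection IB B HB) as [iota Hiota].
destruct (HXdiv alt_harmonic Scc_alt_harmonic) as [x0 _].
destruct (sum_onto_triple IB IX iota x0 Hiota) as [phi Hphi].
pose (Z (t : IX * IB * IX) := let '(i, b, j) := t in flip (X i) (B b) (X j)).
(* Triples not yielding an infinite coinfinite set are replaced by a dummy. *)
exists (fun k => if decide (infcoinf (Z (phi k))) then Z (phi k) else evens); split.
- intros k; destruct decide; [assumption|exact evens_infcoinf].
- intros a Ha.
  destruct (HXdiv (damp a) (Scc_damp a Ha)) as [i Hi].
  destruct (flip_oscillates a (X i) Ha (proj1 (HXic i)) Hi) as [G HG].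
  destruct (unbounded_family_escapes IB B HB (threshold G)) as [b Hb].
  destruct (HXdiv _ (Scc_spread _ _ (fits_infinite G (B b) Hb) Scc_alt_harmonic)) as [j Hj].
  destruct (HG (B b) (X j) Hb (proj1 (HXic j)) Hj) as [Hic Hosc].
  destruct (Hphi (i, b, j)) as [k Hk]; exists k; rewrite Hk; simpl.
  destruct decide; [exact Hosc|contradiction].
Qed.

Lemma min_d_ss_io_perp_le_ss_o_perp (IA : Type) (A : IA -> nat -> Q) :
  (forall i, Scc (A i)) -> ~ (exists X, infcoinf X /\ forall i, sub_osc X (A i)) ->
  (exists D : IA -> nat -> nat, dominating_family D) \/
  (exists A' : IA -> nat -> Q, (forall i, Scc (A' i)) /\
     ~ (exists X, infcoinf X /\ forall i, sub_div X (A' i))).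
Proof.
intros HA Hno.
destruct (classic (inhabited IA)) as [[i0]|HIA].
2: { exfalso; apply Hno; exists evens; split; [exact evens_infcoinf|].
     intros i; exfalso; apply HIA; constructor; exact i. }
destruct (classic (exists D : IA -> nat -> nat, dominating_family D)) as [|HnD];
  [left; assumption|].
right; apply NNPP; intros Hall.
assert (Hdiv : forall A' : IA -> nat -> Q, (forall i, Scc (A' i)) ->
  exists X, infcoinf X /\ forall i, sub_div X (A' i)).
{ intros A' HA'; apply NNPP; intros H; apply Hall; exists A'; split; assumption. }
destruct (Hdiv (fun i => damp (A i)) (fun i => Scc_damp _ (HA i))) as [X1 [HX1 HX1d]].
destruct (choice _ (fun i => flip_oscillates (A i) X1 (HA i) (proj1 HX1) (HX1d i))) as [G HG].
assert (Hf : exists f, forall i, ~ le_star f (threshold (G i))).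
{ apply NNPP; intros H; apply HnD; exists (fun i => threshold (G i)); intros f.
  apply NNPP; intros Hf; apply H; exists f; intros i Hi; apply Hf; eauto. }
destruct Hf as [f Hf].
destruct (Hdiv (fun i => spread (fits (G i) f) alt_harmonic)
  (fun i => Scc_spread _ _ (fits_infinite _ _ (Hf i)) Scc_alt_harmonic)) as [X2 [HX2 HX2d]].
apply Hno; exists (flip X1 f X2); split.
- exact (proj1 (HG i0 f X2 (Hf i0) (proj1 HX2) (HX2d i0))).
- intros i; exact (proj2 (HG i f X2 (Hf i) (proj1 HX2) (HX2d i))).
Qed.

Theorem mainTheorem16 :
  (* ss_o <= max{b, ss_{i,o}} *)
  (forall (IB : Type) (B : IB -> nat -> nat), unbounded_family B ->
   forall (IX : Type) (X : IX -> nat -> Prop),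
     (forall i, infcoinf (X i)) ->
     (forall a, Scc a -> exists i, sub_div (X i) a) ->
     exists Y : (IB + IX)%type -> nat -> Prop,
       (forall j, infcoinf (Y j)) /\
       (forall a, Scc a -> exists j, sub_osc (Y j) a)) /\
  (* min{d, ss_{i,o}^perp} <= ss_o^perp *)
  (forall (IA : Type) (A : IA -> nat -> Q),
     (forall i, Scc (A i)) ->
     ~ (exists X, infcoinf X /\ forall i, sub_osc X (A i)) ->
     (exists D : IA -> nat -> nat, dominating_family D) \/
     (exists A' : IA -> nat -> Q, (forall i, Scc (A' i)) /\
        ~ (exists X, infcoinf X /\ forall i, sub_div X (A' i)))).
Proof.
split.
- intros IB B HB IX X; exact (ss_o_le_max_b_ss_io IB B IX X HB).
- exact min_d_ss_io_perp_le_ss_o_perp.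
Qed.
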